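(* Let $S_X,S_Y$ be finite nonempty action sets, $\lambda\in[0,1)$ and $\varphi:S_X\times S_Y\to\mathbb{R}$ additive. If $\varphi\equiv0$ is $\lambda$-enforceable by $X$, then $\varphi\equiv0$ is $\lambda$-enforceable by $X$ using a two-point reactive strategy, i.e., there exist $\tau_X^+,\tau_X^-\in\Delta(S_X)$, $p_0\in[0,1]$ and $p^*:S_Y\to[0,1]$ such that the strategy playing $p_0\tau_X^++(1-p_0)\tau_X^-$ in round $0$ and $p^*[s_Y]\tau_X^++(1-p^*[s_Y])\tau_X^-$ in round $t+1$ after $Y$ played $s_Y$ in round $t$ is $(\varphi,\lambda)$-autocratic.
   Context: Two players $X,Y$ play a repeated game with finite action sets $S_X,S_Y$; $\Delta(S)$ denotes the probability distributions on $S$. $\varphi$ is additive if $\varphi(s_X,s_Y)=\phi_X(s_X)+\phi_Y(s_Y)$ for some $\phi_X:S_X\to\mathbb{R}$, $\phi_Y:S_Y\to\mathbb{R}$. Histories: $\mathcal{H}=\bigcup_{T\ge0}(S_X\times S_Y)^T$; behavioral strategies are maps $\sigma:\mathcal{H}\to\Delta(S)$; players independently draw actions each round from their strategies evaluated at the history of realized action pairs, with $\mathbb{E}_{\sigma_X,\sigma_Y}$ the expectation over the resulting play. $\sigma_X$ is $(\varphi,\lambda)$-autocratic if for every behavioral strategy $\sigma_Y$ of $Y$, $\mathbb{E}_{\sigma_X,\sigma_Y}[(1-\lambda)\sum_{t\ge0}\lambda^t\varphi(s_X^t,s_Y^t)]=0$; $\varphi\equiv0$ is $\lambda$-enforceable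 by $X$ if such a behavioral strategy exists. *)

From mathcomp Require Import all_boot all_order all_algebra.
From mathcomp Require Import all_classical all_reals all_analysis.
Set Implicit Arguments. Unset Strict Implicit. Unset Printing Implicit Defensive.
Import Order.TTheory GRing.Theory Num.Theory.
Import numFieldNormedType.Exports.
Local Open Scope classical_set_scope.
Local Open Scope ring_scope.

Section RepeatedGame.
Variables (R : realType) (SX SY : finType).

Definition is_dist (S : finType) (d : {ffun S -> R}) : Prop :=
  (forall s, 0 <= d s) /\ \sum_(s : S) d s = 1.

Definition history := seq (SX * SY).

Definition strategy (S : finType) := history -> {ffun S -> R}.
Definition behavioral (S : finType) (sigma : strategy S) : Prop :=
  forall h, is_dist (sigma h).

Definition hist_prob (sX : strategy SX) (sY : strategy SY) (t : nat)
  (h : t.-tuple (SX * SY)) : R :=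
  \prod_(k < t) (sX (take k h) (tnth h k).1 * sY (take k h) (tnth h k).2).

Definition stage_exp (sX : strategy SX) (sY : strategy SY) (phi : SX * SY -> R)
  (t : nat) : R :=
  \sum_(h : t.-tuple (SX * SY))
     hist_prob sX sY h *
     \sum_(a : SX) \sum_(b : SY) sX h a * sY h b * phi (a, b).

Definition disc_partial (lam : R) (sX : strategy SX) (sY : strategy SY)
  (phi : SX * SY -> R) (n : nat) : R :=
  \sum_(t < n) (1 - lam) * lam ^+ t * stage_exp sX sY phi t.

Definition autocratic (phi : SX * SY -> R) (lam : R) (sX : strategy SX) : Prop :=
  forall sY : strategy SY, behavioral sY ->
    disc_partial lam sX sY phi @ \oo --> (0 : R).

Definition enforceable (phi : SX * SY -> R) (lam : R) : Prop :=
  exists sX : strategy SX, behavioral sX /\ autocratic phi lam sX.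

Definition additive_payoff (phi : SX * SY -> R) : Prop :=
  exists (phiX : SX -> R) (phiY : SY -> R),
    forall a b, phi (a, b) = phiX a + phiY b.

Definition mix (p : R) (tp tm : {ffun SX -> R}) : {ffun SX -> R} :=
  [ffun a => p * tp a + (1 - p) * tm a].

Definition reactive (tp tm : {ffun SX -> R}) (p0 : R) (pstar : SY -> R)
  : strategy SX :=
  fun h => match rev h with
           | [::] => mix p0 tp tm
           | x :: _ => mix (pstar x.2) tp tm
           end.

End RepeatedGame.

From mathcomp Require Import all_boot all_order all_algebra.
From mathcomp Require Import all_classical all_reals all_analysis.
From mathcomp Require Import ring lra.
Set Implicit Arguments. Unset Strict Implicit. Unset Printing Implicit Defensive.
Import Order.TTheory GRing.Theory Num.Theory.
Import numFieldNormedType.Exports.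
Local Open Scope classical_set_scope.
Local Open Scope ring_scope.

(* Write x_t and y_t for the expected values of phiX (s_X^t) and phiY (s_Y^t),
   so that the expected stage payoff is x_t + y_t.  Test an autocratic
   strategy of X against the constant strategy b of Y: its x_t (t >= 1) lie
   between lo = min phiX and hi = max phiX, and the discounted sum
   (1 - lam) x_0 + sum_(t >= 1) (1 - lam) lam^t x_t + phiY b = 0 forces
     lam lo <= - phiY b - (1 - lam) x_0 <= lam hi.
   So X can mix the point masses at an argmax and an argmin of phiX, with a
   weight p0 giving first-round mean x_0 and weights pstar b for which lam
   times the mean is - phiY b - (1 - lam) x_0.  Against any strategy of Y,
   this reactive strategy satisfies lam x_(t+1) = - y_t - (1 - lam) x_0, so
   the partial discounted sums telescope to (1 - lam) lam^n (x_0 + y_n),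
   which tends to 0. *)

Section Mean.
Variable R : comPzRingType.

Definition mean (S : finType) (d f : S -> R) : R := \sum_s d s * f s.

Variables (S : finType) (d : S -> R).

Lemma meanD f g : mean d (fun s => f s + g s) = mean d f + mean d g.
Proof. by rewrite /mean -big_split; apply: eq_bigr => s _; rewrite mulrDr. Qed.

Lemma meanN f : mean d (fun s => - f s) = - mean d f.
Proof. by rewrite /mean -sumrN; apply: eq_bigr => s _; rewrite mulrN. Qed.

Lemma meanZ c f : mean d (fun s => c * f s) = c * mean d f.
Proof. by rewrite /mean mulr_sumr; apply: eq_bigr => s _; rewrite mulrCA. Qed.

Lemma mean1 : mean d (fun=> 1) = \sum_s d s.
Proof. by apply: eq_bigr => s _; rewrite mulr1. Qed.

Lemma mean_cst c : \sum_s d s = 1 -> mean d (fun=> c) = c.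
Proof. by move=> d1; rewrite /mean -mulr_suml d1 mul1r. Qed.

End Mean.

Lemma mean_bound (R : numDomainType) (S : finType) (d f : S -> R) lo hi :
  (forall s, 0 <= d s) -> \sum_s d s = 1 -> (forall s, lo <= f s <= hi) ->
  lo <= mean d f <= hi.
Proof.
move=> d0 d1 f_bnd; rewrite -[lo](mean_cst _ d1) -[hi](mean_cst _ d1).
by apply/andP; split; apply: ler_sum => s _; apply: ler_wpM2l => //;
  case/andP: (f_bnd s).
Qed.

Lemma mean_prod_fst (R : comPzRingType) (S1 S2 : finType)
    (d1 : S1 -> R) (d2 : S2 -> R) f :
  \sum_s d2 s = 1 ->
  mean (fun x : S1 * S2 => d1 x.1 * d2 x.2) (fun x => f x.1) = mean d1 f.
Proof.
move=> d2_1; rewrite /mean -(pair_bigA _ (fun a b => d1 a * d2 b * f a)) /=.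
apply: eq_bigr => a _.
under eq_bigr do rewrite mulrAC.
by rewrite -mulr_sumr d2_1 mulr1.
Qed.

Lemma mean_prod_snd (R : comPzRingType) (S1 S2 : finType)
    (d1 : S1 -> R) (d2 : S2 -> R) f :
  \sum_s d1 s = 1 ->
  mean (fun x : S1 * S2 => d1 x.1 * d2 x.2) (fun x => f x.2) = mean d2 f.
Proof.
move=> d1_1; rewrite /mean -(pair_bigA _ (fun a b => d1 a * d2 b * f b)) /=.
under eq_bigr do under eq_bigr do rewrite -mulrA.
by under eq_bigr do rewrite -mulr_sumr; rewrite -mulr_suml d1_1 mul1r.
Qed.

Section Distributions.
Context {R : realType} {S : finType}.

Definition point_mass (a : S) : {ffun S -> R} := [ffun s => (s == a)%:R].

Lemma mean_point_mass a f : mean (point_mass a) f = f a.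
Proof.
rewrite /mean (bigD1 a) //= big1 => [|s /negbTE sa]; rewrite ffunE ?sa ?eqxx.
  by rewrite mul1r addr0.
by rewrite mul0r.
Qed.

Lemma point_mass_dist a : is_dist (point_mass a).
Proof.
split=> [s|]; first by rewrite ffunE ler0n.
by rewrite -mean1 mean_point_mass.
Qed.

End Distributions.

Section Mix.
Variables (R : realType) (S : finType).
Implicit Types (p : R) (tp tm : {ffun S -> R}).

Lemma mean_mix p tp tm f :
  mean (mix p tp tm) f = p * mean tp f + (1 - p) * mean tm f.
Proof.
by rewrite /mean !mulr_sumr -big_split; apply: eq_bigr => s _; rewrite ffunE /=; ring.
Qed.

Lemma mix_dist p tp tm :
  is_dist tp -> is_dist tm -> 0 <= p <= 1 -> is_dist (mix p tp tm).
Proof.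
move=> [tp0 tp1] [tm0 tm1] /andP[p0 p1]; split=> [s|].
  by rewrite ffunE addr_ge0 // mulr_ge0 // subr_ge0.
by rewrite -mean1 mean_mix !mean1 tp1 tm1; ring.
Qed.

End Mix.

Section Discounting.
Variables (R : realType) (lam : R).
Hypotheses (lam_ge0 : 0 <= lam) (lam_lt1 : lam < 1).
Implicit Types (u x y : nat -> R).

Definition disc_sum u n := \sum_(t < n) (1 - lam) * lam ^+ t * u t.

Lemma disc_sumS u n :
  disc_sum u n.+1 = (1 - lam) * u 0%N + lam * disc_sum (fun t => u t.+1) n.
Proof.
rewrite /disc_sum big_ord_recl mulr_sumr expr0 mulr1; congr (_ + _).
by apply: eq_bigr => t _; rewrite exprS; ring.
Qed.

Lemma disc_sumN u n : disc_sum (fun t => - u t) n = - disc_sum u n.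
Proof. by rewrite /disc_sum -sumrN; apply: eq_bigr => t _; rewrite mulrN. Qed.

Lemma disc_sum_cst c n : disc_sum (fun=> c) n = (1 - lam ^+ n) * c.
Proof.
elim: n => [|n IH]; first by rewrite /disc_sum big_ord0 expr0 subrr mul0r.
by rewrite /disc_sum big_ord_recr -/(disc_sum _ n) IH exprS /=; ring.
Qed.

Lemma ler_disc_sum u v n : (forall t, u t <= v t) -> disc_sum u n <= disc_sum v n.
Proof.
move=> uv; apply: ler_sum => t _; apply: ler_wpM2l => //.
by rewrite mulr_ge0 ?exprn_ge0 // subr_ge0 ltW.
Qed.

Lemma cvg_lam_expr : (GRing.exp lam : R ^nat) @ \oo --> 0.
Proof. by apply: cvg_expr; rewrite ger0_norm. Qed.

Lemma cvg_disc_sum_cst c : disc_sum (fun=> c) @ \oo --> c.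
Proof.
rewrite (funext (disc_sum_cst c)).
rewrite -[c in _ --> c]mul1r; apply: cvgMr_tmp.
by rewrite -[X in _ --> X](subr0 1); apply: cvgB; [exact: cvg_cst | exact: cvg_lam_expr].
Qed.

Lemma disc_sum_cvg0_ge u lo :
  (forall t, lo <= u t.+1) -> disc_sum u @ \oo --> 0 ->
  (1 - lam) * u 0%N + lam * lo <= 0.
Proof.
move=> lo_u u0; rewrite -cvg_shiftS in u0.
apply: (ler_cvg_to _ u0).
  apply: cvgD; first exact: cvg_cst.
  by apply: cvgMl_tmp; exact: cvg_disc_sum_cst.
apply: filterE => n /=; rewrite disc_sumS lerD2l.
by apply: ler_wpM2l => //; exact: ler_disc_sum.
Qed.

Lemma disc_sum_cvg0_bounds u lo hi :
  (forall t, lo <= u t.+1 <= hi) -> disc_sum u @ \oo --> 0 ->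
  lam * lo <= - ((1 - lam) * u 0%N) <= lam * hi.
Proof.
move=> u_bnd u0.
have lo_u t : lo <= u t.+1 by case/andP: (u_bnd t).
have u_hi t : - hi <= - u t.+1 by rewrite lerN2; case/andP: (u_bnd t).
have Nu0 : disc_sum (fun t => - u t) @ \oo --> 0.
  by rewrite (funext (disc_sumN u)) -oppr0; exact: cvgN.
have := disc_sum_cvg0_ge lo_u u0; have := disc_sum_cvg0_ge u_hi Nu0.
by move=> ? ?; apply/andP; split; lra.
Qed.

Lemma disc_sum_telescope x y n :
  (forall t, lam * x t.+1 = - y t - (1 - lam) * x 0%N) ->
  disc_sum (fun t => x t + y t) n.+1 = (1 - lam) * lam ^+ n * (x 0%N + y n).
Proof.
move=> xy; elim: n => [|n IH].
  by rewrite /disc_sum big_ord_recr big_ord0 /= add0r.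
rewrite /disc_sum big_ord_recr /= -/(disc_sum (fun t => x t + y t) n.+1) IH.
have -> : (1 - lam) * lam ^+ n.+1 * (x n.+1 + y n.+1) =
          (1 - lam) * lam ^+ n * (lam * x n.+1) + (1 - lam) * lam ^+ n.+1 * y n.+1.
  by rewrite exprS; ring.
by rewrite xy exprS; ring.
Qed.

Lemma cvg_lam_expr_bounded w lo hi :
  (forall n, lo <= w n <= hi) -> (fun n => lam ^+ n * w n) @ \oo --> 0.
Proof.
move=> w_bnd.
apply: (@squeeze_cvgr _ _ _ _ (fun n => lam ^+ n * lo) (fun n => lam ^+ n * hi)).
- apply: filterE => n; case/andP: (w_bnd n) => lo_w w_hi.
  by rewrite !ler_wpM2l ?exprn_ge0.
- by rewrite -(mul0r lo); exact: cvgMr_tmp cvg_lam_expr.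
- by rewrite -(mul0r hi); exact: cvgMr_tmp cvg_lam_expr.
Qed.

Lemma disc_sum_cvg0 x y lo hi :
  (forall t, lo <= y t <= hi) ->
  (forall t, lam * x t.+1 = - y t - (1 - lam) * x 0%N) ->
  disc_sum (fun t => x t + y t) @ \oo --> 0.
Proof.
move=> y_bnd xy; rewrite -cvg_shiftS.
have -> : [sequence disc_sum (fun t => x t + y t) n.+1]_n =
          (fun n => (1 - lam) * (lam ^+ n * (x 0%N + y n))).
  by apply/funext => n /=; rewrite disc_sum_telescope // mulrA.
have w0 : (fun n => lam ^+ n * (x 0%N + y n)) @ \oo --> 0.
  by apply: (@cvg_lam_expr_bounded _ (x 0%N + lo) (x 0%N + hi)) => n; rewrite !lerD2l.
suff : (fun n => (1 - lam) * (lam ^+ n * (x 0%N + y n))) @ \oo --> (1 - lam) * 0.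
  by rewrite mulr0.
exact: cvgMl_tmp.
Qed.

End Discounting.

Lemma sum_tuple_rcons (V : nmodType) (T : finType) n (F : n.+1.-tuple T -> V) :
  \sum_(h : n.+1.-tuple T) F h =
  \sum_(h : n.-tuple T) \sum_(x : T) F [tuple of rcons h x].
Proof.
pose split_last (h : n.+1.-tuple T) :=
  ([tuple of belast (thead h) (behead h)], last (thead h) (behead h)).
have rcons_split h : [tuple of rcons (split_last h).1 (split_last h).2] = h.
  by apply: val_inj; rewrite /= -lastI [in RHS](tuple_eta h).
rewrite pair_big (reindex (fun p : n.-tuple T * T => [tuple of rcons p.1 p.2])) //.
exists split_last => [[h x] _ | h _]; last exact: rcons_split.
case/rcons_inj: (congr1 val (rcons_split [tuple of rcons h x])) => belast_h last_x.
by congr pair; first apply: val_inj.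
Qed.

Section Play.
Variables (R : realType) (SX SY : finType).
Implicit Types (sX : strategy R SX SY SX) (sY : strategy R SX SY SY).

Definition step sX sY (h : history SX SY) (x : SX * SY) : R := sX h x.1 * sY h x.2.

Definition hist_mean sX sY t (G : history SX SY -> R) : R :=
  mean (@hist_prob R SX SY sX sY t) (fun h => G h).

Lemma hist_prob_rcons sX sY t (h : t.-tuple (SX * SY)) x :
  hist_prob sX sY [tuple of rcons h x] = hist_prob sX sY h * step sX sY h x.
Proof.
have take_rcons k : (k <= t)%N -> take k (rcons h x) = take k h.
  by move=> kt; rewrite -cats1 takel_cat // size_tuple.
rewrite /hist_prob big_ord_recr /= take_rcons // take_oversize ?size_tuple //.
congr (_ * _).
- apply: eq_bigr => k _; rewrite take_rcons 1?ltnW //.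
  by rewrite !(tnth_nth x) /= nth_rcons size_tuple ltn_ord.
- by rewrite (tnth_nth x) /= nth_rcons size_tuple ltnn eqxx.
Qed.

Lemma hist_mean0 sX sY G : hist_mean sX sY 0 G = G [::].
Proof.
rewrite /hist_mean /mean (big_pred1 [tuple]) => [|h]; last by rewrite [h]tuple0 /= eqxx.
by rewrite /hist_prob big_ord0 mul1r.
Qed.

Lemma hist_meanS sX sY t G :
  hist_mean sX sY t.+1 G =
  hist_mean sX sY t (fun h => mean (step sX sY h) (fun x => G (rcons h x))).
Proof.
rewrite /hist_mean /mean sum_tuple_rcons; apply: eq_bigr => h _.
by rewrite mulr_sumr; apply: eq_bigr => x _; rewrite hist_prob_rcons mulrA.
Qed.

Section Behavioral.
Variables (sX : strategy R SX SY SX) (sY : strategy R SX SY SY).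
Hypotheses (sX_beh : behavioral sX) (sY_beh : behavioral sY).

Lemma step_ge0 h x : 0 <= step sX sY h x.
Proof. by rewrite mulr_ge0 //; [case: (sX_beh h) | case: (sY_beh h)]. Qed.

Lemma sum_step h : \sum_x step sX sY h x = 1.
Proof.
rewrite -(pair_bigA _ (fun a b => sX h a * sY h b)) /=.
case: (sX_beh h) => _ <-; case: (sY_beh h) => _ sY1.
by apply: eq_bigr => a _; rewrite -mulr_sumr sY1 mulr1.
Qed.

Lemma hist_prob_ge0 t (h : t.-tuple (SX * SY)) : 0 <= hist_prob sX sY h.
Proof. by apply: prodr_ge0 => k _; exact: step_ge0. Qed.

Lemma sum_hist_prob t : \sum_(h : t.-tuple (SX * SY)) hist_prob sX sY h = 1.
Proof.
rewrite -[LHS]mean1 -/(hist_mean sX sY t (fun=> 1)).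
elim: t => [|t IH]; first exact: hist_mean0.
by rewrite hist_meanS -[RHS]IH; apply: eq_bigr => h _; rewrite mean1 sum_step.
Qed.

Lemma hist_mean_cst t c : hist_mean sX sY t (fun=> c) = c.
Proof. exact/mean_cst/sum_hist_prob. Qed.

Lemma hist_mean_bound t G lo hi :
  (forall h, lo <= G h <= hi) -> lo <= hist_mean sX sY t G <= hi.
Proof.
by move=> G_bnd; apply: mean_bound => //; [exact: hist_prob_ge0 | exact: sum_hist_prob].
Qed.

End Behavioral.

Lemma stage_expE sX sY phi t :
  stage_exp sX sY phi t = hist_mean sX sY t (fun h => mean (step sX sY h) phi).
Proof.
apply: eq_bigr => h _; congr (_ * _).
rewrite /mean (pair_bigA _ (fun a b => sX h a * sY h b * phi (a, b))).
by apply: eq_bigr => -[].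
Qed.

Definition mean_payoffX sX sY (phiX : SX -> R) t :=
  hist_mean sX sY t (fun h => mean (sX h) phiX).

Definition mean_payoffY sX sY (phiY : SY -> R) t :=
  hist_mean sX sY t (fun h => mean (sY h) phiY).

Lemma stage_exp_additive sX sY phi phiX phiY t :
  behavioral sX -> behavioral sY -> (forall a b, phi (a, b) = phiX a + phiY b) ->
  stage_exp sX sY phi t = mean_payoffX sX sY phiX t + mean_payoffY sX sY phiY t.
Proof.
move=> sX_beh sY_beh phiE.
rewrite stage_expE /mean_payoffX /mean_payoffY /hist_mean -meanD.
apply: eq_bigr => h _; congr (_ * _).
have -> : mean (step sX sY h) phi =
          mean (step sX sY h) (fun x => phiX x.1) +
          mean (step sX sY h) (fun x => phiY x.2).
  by rewrite -meanD; apply: eq_bigr => -[a b] _; rewrite phiE.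
by rewrite mean_prod_fst ?mean_prod_snd //; [case: (sX_beh h) | case: (sY_beh h)].
Qed.

Lemma disc_partial_additive (lam : R) sX sY phi phiX phiY :
  behavioral sX -> behavioral sY -> (forall a b, phi (a, b) = phiX a + phiY b) ->
  disc_partial lam sX sY phi =
  disc_sum lam (fun t => mean_payoffX sX sY phiX t + mean_payoffY sX sY phiY t).
Proof.
move=> sX_beh sY_beh phiE; apply/funext => n; apply: eq_bigr => t _.
by rewrite (stage_exp_additive t sX_beh sY_beh phiE).
Qed.

End Play.

Section Enforcement.
Variables (R : realType) (SX SY : finType) (lam : R).
Hypotheses (lam_ge0 : 0 <= lam) (lam_lt1 : lam < 1).
Variables (phi : SX * SY -> R) (phiX : SX -> R) (phiY : SY -> R).
Hypothesis phiE : forall a b, phi (a, b) = phiX a + phiY b.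

Lemma autocratic_first_round_bounds (sX : strategy R SX SY SX) lo hi b :
  behavioral sX -> autocratic phi lam sX -> (forall a, lo <= phiX a <= hi) ->
  lam * lo <= - phiY b - (1 - lam) * mean (sX [::]) phiX <= lam * hi.
Proof.
move=> sX_beh sX_aut phiX_bnd.
pose sY : strategy R SX SY SY := fun=> point_mass b.
have sY_beh : behavioral sY by move=> h; exact: point_mass_dist.
have payoffY_b t : mean_payoffY sX sY phiY t = phiY b.
  rewrite -(hist_mean_cst sX_beh sY_beh t (phiY b)); apply: eq_bigr => h _.
  by rewrite mean_point_mass.
have payoffX_bnd t : lo + phiY b <= mean_payoffX sX sY phiX t + phiY b <= hi + phiY b.
  rewrite !lerD2r; apply: hist_mean_bound => // h.
  by case: (sX_beh h) => sX_ge0 sX_1; exact: mean_bound.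
have := sX_aut sY sY_beh; rewrite (disc_partial_additive _ sX_beh sY_beh phiE).
under eq_fun do rewrite payoffY_b.
move=> /(disc_sum_cvg0_bounds lam_ge0 lam_lt1 (fun t => payoffX_bnd t.+1)).
by rewrite /mean_payoffX hist_mean0 => /andP[lo_x x_hi]; apply/andP; split; lra.
Qed.

Section Reactive.
Variables (tp tm : {ffun SX -> R}) (p0 : R) (pstar : SY -> R).
Hypotheses (tp_dist : is_dist tp) (tm_dist : is_dist tm).
Hypotheses (p0_01 : 0 <= p0 <= 1) (pstar_01 : forall b, 0 <= pstar b <= 1).

Lemma reactive_behavioral : behavioral (reactive tp tm p0 pstar).
Proof. by move=> h; rewrite /reactive; case: (rev h) => [|x _]; exact: mix_dist. Qed.

Lemma reactive_rcons h x : reactive tp tm p0 pstar (rcons h x) = mix (pstar x.2) tp tm.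
Proof. by rewrite /reactive rev_rcons. Qed.

Lemma reactive_autocratic :
  (forall b, lam * mean (mix (pstar b) tp tm) phiX =
             - phiY b - (1 - lam) * mean (mix p0 tp tm) phiX) ->
  autocratic phi lam (reactive tp tm p0 pstar).
Proof.
move=> pstarE sY sY_beh; set sX := reactive tp tm p0 pstar.
have sX_beh : behavioral sX := reactive_behavioral.
set x0 := mean (mix p0 tp tm) phiX.
have payoffX0 : mean_payoffX sX sY phiX 0 = x0 by exact: hist_mean0.
have payoffXS t : lam * mean_payoffX sX sY phiX t.+1 =
                  - mean_payoffY sX sY phiY t - (1 - lam) * x0.
  transitivity (hist_mean sX sY t (fun h => - mean (sY h) phiY - (1 - lam) * x0));
    last first.
    by rewrite /hist_mean meanD meanN (mean_cst _ (sum_hist_prob sX_beh sY_beh t)).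
  rewrite /mean_payoffX hist_meanS -meanZ; apply: eq_bigr => h _; congr (_ * _).
  transitivity (mean (step sX sY h) (fun x => - phiY x.2 - (1 - lam) * x0)).
    by rewrite -meanZ; apply: eq_bigr => x _; rewrite /sX reactive_rcons pstarE.
  rewrite (mean_prod_snd (sY h) (fun b => - phiY b - (1 - lam) * x0));
    last by case: (sX_beh h).
  by rewrite meanD meanN mean_cst //; case: (sY_beh h).
pose loY := \big[Order.min/0]_b phiY b; pose hiY := \big[Order.max/0]_b phiY b.
have payoffY_bnd t : loY <= mean_payoffY sX sY phiY t <= hiY.
  apply: hist_mean_bound => // h; case: (sY_beh h) => sY_ge0 sY_1.
  by apply: mean_bound => // b; rewrite bigmin_le le_bigmax.
rewrite (disc_partial_additive _ sX_beh sY_beh phiE).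
by apply: (disc_sum_cvg0 lam_ge0 lam_lt1 payoffY_bnd); rewrite payoffX0.
Qed.

End Reactive.
End Enforcement.

Lemma convex_interpolation (R : realFieldType) (lo hi w : R) :
  lo <= w <= hi -> exists p, 0 <= p <= 1 /\ p * hi + (1 - p) * lo = w.
Proof.
move=> /andP[lo_w w_hi]; case: (lerP hi lo) => [hi_lo | lo_hi].
  by exists 0; split; [rewrite lexx ler01 | lra].
have hi_lo_gt0 : 0 < hi - lo by rewrite subr_gt0.
exists ((w - lo) / (hi - lo)); split.
  by rewrite divr_ge0 ?subr_ge0 ?ler_pdivrMr ?mul1r ?lerD2r // ltW.
by field; rewrite gt_eqF.
Qed.

Lemma exists_argmin_argmax (S : finType) (d : Order.disp_t) (T : orderType d)
    (f : S -> T) :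
  (0 < #|S|)%N -> exists amin amax, forall a, (f amin <= f a <= f amax)%O.
Proof.
case/card_gt0P=> a0 _.
exists [arg min_(a < a0) f a]%O, [arg max_(a > a0) f a]%O => a.
case: arg_minP => // i _ i_min; case: arg_maxP => // j _ j_max.
by rewrite i_min //; exact: j_max.
Qed.

Theorem corollary2 (R : realType) (SX SY : finType)
  (neX : (0 < #|SX|)%N) (neY : (0 < #|SY|)%N)
  (lam : R) (lam_ge0 : 0 <= lam) (lam_lt1 : lam < 1)
  (phi : SX * SY -> R) (add_phi : additive_payoff phi) :
  enforceable phi lam ->
  exists (tp tm : {ffun SX -> R}) (p0 : R) (pstar : SY -> R),
    [/\ is_dist tp, is_dist tm, 0 <= p0 <= 1,
        (forall y, 0 <= pstar y <= 1) &
        autocratic phi lam (reactive tp tm p0 pstar)].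
Proof.
case: add_phi => phiX [phiY phiE] [sX [sX_beh sX_aut]].
have [amin [amax phiX_bnd]] := exists_argmin_argmax phiX neX.
pose tp : {ffun SX -> R} := point_mass amax; pose tm : {ffun SX -> R} := point_mass amin.
have mean_mix_phiX p : mean (mix p tp tm) phiX = p * phiX amax + (1 - p) * phiX amin.
  by rewrite mean_mix !mean_point_mass.
have [sX0_ge0 sX0_1] := sX_beh [::].
have [p0 [p0_01 p0E]] := convex_interpolation (mean_bound sX0_ge0 sX0_1 phiX_bnd).
have [pstar pstarE] := choice (fun b => convex_interpolation
  (autocratic_first_round_bounds lam_ge0 lam_lt1 phiE b sX_beh sX_aut phiX_bnd)).
have pstar_01 b : 0 <= pstar b <= 1 by case: (pstarE b).
have tp_dist : is_dist tp := point_mass_dist amax.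
have tm_dist : is_dist tm := point_mass_dist amin.
exists tp, tm, p0, pstar; split => //.
apply: (reactive_autocratic lam_ge0 lam_lt1 phiE) => // b.
by rewrite !mean_mix_phiX p0E; case: (pstarE b) => _ <-; ring.
Qed.
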